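(* Let $k\ge1$, $A,B_1,\dots,B_k,C_1,\dots,C_k\in\mathbb{C}^{r\times r}$ with $C_j+mI$ invertible for all $m\ge0$ and all $j$, and $C_iC_j=C_jC_i$ for all $i,j$. Fix $i$ and $n\ge1$, and suppose $B_i+mI$ is invertible for all $m\ge0$. Then $$F_{\mathcal A}[B_i+nI]=\sum_{n_1=0}^n\binom{n}{n_1}(A)_{n_1}x_i^{n_1}\,F_{\mathcal A}[A+n_1I,\,B_i+n_1I,\,C_i+n_1I]\,(C_i)^{-1}_{n_1}.$$ Furthermore, if $B_i-n_1I$ is invertible for $0\le n_1\le n$, then $$F_{\mathcal A}[B_i-nI]=\sum_{n_1=0}^n\binom{n}{n_1}(A)_{n_1}(-x_i)^{n_1}\,F_{\mathcal A}[A+n_1I,\,C_i+n_1I]\,(C_i)^{-1}_{n_1}.$$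
   Context: For $M\in\mathbb{C}^{r\times r}$: $(M)_0=I$, $(M)_m=M(M+I)\cdots(M+(m-1)I)$, $(M)^{-1}_m=((M)_m)^{-1}$. $$F_{\mathcal A}=F_{\mathcal A}[A,B_1,\dots,B_k;C_1,\dots,C_k;x_1,\dots,x_k]=\sum_{m_1,\dots,m_k\ge0}(A)_{m_1+\cdots+m_k}\prod_{j=1}^k(B_j)_{m_j}\prod_{j=1}^k(C_j)^{-1}_{m_j}\prod_{j=1}^k\frac{x_j^{m_j}}{m_j!},$$ $x_j$ scalar variables, matrix products in order of increasing index; identities are of formal power series in the $x_j$. $F_{\mathcal A}[\dots]$ lists only the shifted parameters, all others unchanged (in the second formula $B_i$ is unshifted). *)

From HB Require Import structures.
From mathcomp Require Import all_boot all_order all_algebra.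
From mathcomp Require Import complex reals.
Set Implicit Arguments. Unset Strict Implicit. Unset Printing Implicit Defensive.
Import Order.TTheory GRing.Theory Num.Theory.
Local Open Scope ring_scope.

Section Defs.
Variable (F : fieldType) (r : nat).

Fixpoint mpoch (M : 'M[F]_r) (m : nat) : 'M[F]_r :=
  if m is m'.+1 then mpoch M m' *m (M + (m'%:R)%:M) else 1%:M.

Definition mpochinv (M : 'M[F]_r) (m : nat) : 'M[F]_r := invmx (mpoch M m).

Definition mxprod_ord (k : nat) (f : 'I_k -> 'M[F]_r) : 'M[F]_r :=
  foldr (fun j acc => f j *m acc) 1%:M (enum 'I_k).

(* The formal power series F_A[A,B,C;x] represented by its coefficient
   family: coefficient of x_1^{m_1}...x_k^{m_k}. *)
Definition FA_coef (k : nat) (A : 'M[F]_r) (B C : 'I_k -> 'M[F]_r)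
  (m : 'I_k -> nat) : 'M[F]_r :=
  (\prod_(j < k) (m j)`!%:R)^-1 *:
   (mpoch A (\sum_(j < k) m j)
    *m mxprod_ord (fun j => mpoch (B j) (m j))
    *m mxprod_ord (fun j => mpochinv (C j) (m j))).

Definition shift_at (k : nat) (B : 'I_k -> 'M[F]_r) (i : 'I_k) (n : int)
  : 'I_k -> 'M[F]_r :=
  fun j => if j == i then B j + (n%:~R)%:M else B j.

(* multi-index m - n1 e_i (only used when n1 <= m i) *)
Definition dec_at (k : nat) (m : 'I_k -> nat) (i : 'I_k) (n1 : nat)
  : 'I_k -> nat := fun j => if j == i then (m j - n1)%N else m j.

End Defs.

(* Fix a multi-index m.  The coefficient of x^m in F_A is
       (prod_j m_j!)^-1 (A)_|m| * prod_j (B_j)_{m_j} * prod_j (C_j)^-1_{m_j},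
   and only the factor (B_i)_{m_i} feels the shift of B_i.  Two matrix
   Chu-Vandermonde expansions (Pochhammer symbols of a single matrix commute
   with its shifts) give
       (B + n)_p = sum_j C(n,j) p^_j (B + j)_{p-j},
       (B - n)_p = sum_j (-1)^j C(n,j) p^_j (B)_{p-j}.
   The ordered product over j is affine in its i-th factor, so the expansion
   passes through it.  For the term with index j <= m_i we then regroup
       (A)_|m| = (A)_j (A + j)_{|m|-j},
       (C_i)^-1_{m_i} = (C_i + j)^-1_{m_i-j} (C_i)^-1_j,
   moving (C_i)^-1_j to the right end (it commutes with the other C_l),
   and m_i^_j / prod m! = 1 / prod (m - j e_i)!.  This recognises the term as
   (A)_j * [coefficient of x^{m - j e_i} in the shifted F_A] * (C_i)^-1_j,
   which is the claimed identity (lemma FA_coef_expand); the theorem is the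
   instance of that lemma for the two expansions above.  The identities hold
   coefficientwise without the invertibility hypotheses on B_i. *)

From HB Require Import structures.
From mathcomp Require Import all_boot all_order all_algebra.
From mathcomp Require Import complex reals.
From mathcomp Require Import ring.
Set Implicit Arguments. Unset Strict Implicit. Unset Printing Implicit Defensive.
Import Order.TTheory GRing.Theory Num.Theory.
Local Open Scope ring_scope.

Section Pochhammer.
Variables (F : fieldType) (r : nat).
Implicit Types (M X Y : 'M[F]_r).

Lemma mpoch_add M a b :
  mpoch M (a + b) = mpoch M a *m mpoch (M + a%:R%:M) b.
Proof.
elim: b => [|b IH]; first by rewrite addn0 /= mulmx1.
by rewrite addnS /= IH -mulmxA natrD (raddfD (@scalar_mx F r)) addrA.
Qed.

Lemma mpochSl M p : mpoch M p.+1 = M *m mpoch (M + 1%:M) p.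
Proof. by rewrite -add1n mpoch_add /= mul1mx raddf0 addr0. Qed.

Lemma comm_mx_mpoch X Y p : comm_mx X Y -> comm_mx X (mpoch Y p).
Proof.
move=> cXY; elim: p => [|p IH] /=; first exact: comm_mx1.
exact: comm_mxM IH (comm_mxD cXY (comm_mx_scalar _ _)).
Qed.

Lemma comm_mx_mpoch2 X Y p q : comm_mx X Y -> comm_mx (mpoch X p) (mpoch Y q).
Proof.
move=> cXY; apply/comm_mx_sym/comm_mx_mpoch/comm_mx_sym/comm_mx_mpoch.
exact: cXY.
Qed.

Lemma mpoch_shift_succ M p :
  mpoch (M + 1%:M) p = mpoch M p + p%:R *: mpoch (M + 1%:M) p.-1.
Proof.
case: p => [|p]; first by rewrite /= scale0r addr0.
rewrite [mpoch M _]mpochSl /=.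
have cM : comm_mx M (mpoch (M + 1%:M) p).
  exact: comm_mx_mpoch (comm_mxD (comm_mx_refl M) (comm_mx_scalar _ _)).
by rewrite -addrA -raddfD mulmxDr cM mul_mx_scalar mulrS.
Qed.

Lemma mpoch_shift_pred M p :
  mpoch (M - 1%:M) p = mpoch M p - p%:R *: mpoch M p.-1.
Proof.
case: p => [|p]; first by rewrite /= scale0r subr0.
rewrite mpochSl addrNK /=.
have cM : comm_mx M (mpoch M p) by exact: comm_mx_mpoch (comm_mx_refl M).
rewrite mulmxBl mul1mx cM mulmxDr mul_mx_scalar -natr1 scalerDl scale1r.
by rewrite opprD addrA addrK.
Qed.

End Pochhammer.

Section Expansions.
Variables (F : fieldType) (r : nat).
Implicit Types (M : 'M[F]_r).

Lemma sum_binomial_succ (V : lmodType F) (f : nat -> V) n :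
  \sum_(0 <= j < n.+2) 'C(n.+1, j)%:R *: f j =
  \sum_(0 <= j < n.+1) 'C(n, j)%:R *: f j
  + \sum_(0 <= j < n.+1) 'C(n, j)%:R *: f j.+1.
Proof.
rewrite big_nat_recl // [in X in _ = X + _]big_nat_recl // !bin0 -addrA.
congr (_ + _).
rewrite [X in _ = X + _](_ : _ = \sum_(0 <= j < n.+1) 'C(n, j.+1)%:R *: f j.+1).
  by rewrite -big_split; apply: eq_bigr => j _; rewrite binS natrD scalerDl.
by rewrite big_nat_recr //= bin_small // scale0r addr0.
Qed.

Lemma mpoch_shift_up M n p :
  mpoch (M + n%:R%:M) p =
  \sum_(0 <= j < n.+1) 'C(n, j)%:R *: ((p ^_ j)%:R *: mpoch (M + j%:R%:M) (p - j)).
Proof.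
elim: n M => [|n IH] M.
  by rewrite big_nat1 bin0 ffactn0 subn0 !scale1r.
have -> : M + n.+1%:R%:M = (M + 1%:M) + n%:R%:M by rewrite -addrA -raddfD -mulrS.
rewrite IH (sum_binomial_succ (V := 'M[F]_r) (fun j => (p ^_ j)%:R *: mpoch (M + j%:R%:M) (p - j))).
rewrite -big_split; apply: eq_bigr => j _ /=; rewrite -scalerDr; congr (_ *: _).
rewrite addrAC mpoch_shift_succ scalerDr scalerA -natrM -ffactnSr -subnS.
by rewrite -addrA -raddfD -natr1.
Qed.

Lemma mpoch_shift_down M n p :
  mpoch (M - n%:R%:M) p =
  \sum_(0 <= j < n.+1)
     ((-1) ^+ j * 'C(n, j)%:R) *: ((p ^_ j)%:R *: mpoch M (p - j)).
Proof.
elim: n M => [|n IH] M.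
  by rewrite big_nat1 bin0 ffactn0 subn0 expr0 mulr1 !scale1r raddf0 subr0.
have -> : M - n.+1%:R%:M = (M - 1%:M) - n%:R%:M.
  by rewrite -addrA -opprD -raddfD -mulrS.
rewrite IH.
transitivity (\sum_(0 <= j < n.+2)
   'C(n.+1, j)%:R *: (((-1) ^+ j * (p ^_ j)%:R) *: mpoch M (p - j))); last first.
  by apply: eq_bigr => j _; rewrite !scalerA mulrCA mulrA.
rewrite (sum_binomial_succ (V := 'M[F]_r) (fun j => ((-1) ^+ j * (p ^_ j)%:R) *: mpoch M (p - j))).
rewrite -big_split; apply: eq_bigr => j _ /=; rewrite -scalerDr.
rewrite mpoch_shift_pred scalerBr -subnS !scalerA exprS ffactnSr natrM.
by rewrite scalerBr scalerDr !scalerA -scaleNr; congr (_ *: _ + _ *: _); ring.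
Qed.

End Expansions.

Section OrderedProduct.
Variables (F : fieldType) (r k : nat).
Implicit Types (X Y : 'M[F]_r) (h : 'I_k -> 'M[F]_r) (s : seq 'I_k).

Definition upd h (i : 'I_k) X : 'I_k -> 'M[F]_r :=
  fun j => if j == i then X else h j.

Definition seqprod h s : 'M[F]_r := foldr (fun j acc => h j *m acc) 1%:M s.

(* Unfolding mxprod_ord, so that induction on the index sequence applies. *)
Lemma mxprod_ordE (f : 'I_k -> 'M[F]_r) : mxprod_ord f = seqprod f (enum 'I_k).
Proof. by []. Qed.

Lemma mxprod_ord_eq (f g : 'I_k -> 'M[F]_r) : f =1 g -> mxprod_ord f = mxprod_ord g.
Proof. by move=> efg; rewrite !mxprod_ordE; elim: (enum 'I_k) => //= j s ->; rewrite efg. Qed.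

Lemma seqprod_upd_notin h i X Y s :
  i \notin s -> seqprod (upd h i X) s = seqprod (upd h i Y) s.
Proof.
elim: s => //= j s IH; rewrite in_cons negb_or => /andP[ji si].
by rewrite IH // /upd eq_sym (negbTE ji).
Qed.

Lemma seqprod_upd_affine h i s : uniq s -> i \in s ->
  exists L R, forall X, seqprod (upd h i X) s = L *m X *m R.
Proof.
elim: s => //= j s IH /andP[js us]; rewrite in_cons.
have [<- _ | ji /= si] := eqVneq j i.
  exists 1%:M, (seqprod (upd h j 0) s) => X.
  by rewrite mul1mx {1}/upd eqxx (seqprod_upd_notin _ X 0 js).
have [L [R eLR]] := IH us si.
by exists (h j *m L), R => X; rewrite eLR {1}/upd (negbTE ji) !mulmxA.
Qed.

Lemma mxprod_upd_sum h i (I : Type) (t : seq I) (P : pred I) (c : I -> F)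
    (Xs : I -> 'M[F]_r) :
  mxprod_ord (upd h i (\sum_(j <- t | P j) c j *: Xs j)) =
  \sum_(j <- t | P j) c j *: mxprod_ord (upd h i (Xs j)).
Proof.
have [L [R eLR]] : exists L R, forall X, mxprod_ord (upd h i X) = L *m X *m R.
  exact: seqprod_upd_affine (enum_uniq 'I_k) (mem_enum 'I_k i).
rewrite eLR mulmx_sumr mulmx_suml.
by apply: eq_bigr => j _; rewrite eLR -scalemxAr -scalemxAl.
Qed.

Section Absorb.
Variables (h : 'I_k -> 'M[F]_r) (i : 'I_k) (Y : 'M[F]_r).
Hypothesis hY : forall j, j != i -> comm_mx (h j) Y.

Lemma comm_mx_seqprod_notin X s : i \notin s -> comm_mx (seqprod (upd h i X) s) Y.
Proof.
elim: s => [_|j s IH]; first exact: comm1mx.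
rewrite in_cons negb_or => /andP[ji si].
change (comm_mx (upd h i X j *m seqprod (upd h i X) s) Y).
rewrite {1}/upd eq_sym (negbTE ji).
apply/comm_mx_sym/comm_mxM; apply/comm_mx_sym; [by apply: hY; rewrite eq_sym | exact: IH].
Qed.

Lemma seqprod_upd_mulr X s : uniq s -> i \in s ->
  seqprod (upd h i X) s *m Y = seqprod (upd h i (X *m Y)) s.
Proof.
elim: s => //= j s IH /andP[js us]; rewrite in_cons.
have [eji _ | ji /= si] := eqVneq j i; last by rewrite -mulmxA IH // /upd (negbTE ji).
subst j; rewrite /upd eqxx -mulmxA (comm_mx_seqprod_notin X js) mulmxA.
by rewrite (seqprod_upd_notin _ X (X *m Y) js).
Qed.

Lemma mxprod_upd_mulr X : mxprod_ord (upd h i X) *m Y = mxprod_ord (upd h i (X *m Y)).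
Proof. exact: seqprod_upd_mulr (enum_uniq 'I_k) (mem_enum 'I_k i). Qed.

End Absorb.
End OrderedProduct.

Section InversePochhammer.
Variables (F : fieldType) (r : nat).
Implicit Types (M P Q : 'M[F]_r).

Lemma invmx_mul P Q : P \in unitmx -> Q \in unitmx ->
  invmx (P *m Q) = invmx Q *m invmx P.
Proof.
move=> uP uQ; have uPQ : P *m Q \in unitmx by rewrite unitmx_mul uP uQ.
rewrite -[RHS]mulmx1 -(mulmxV uPQ) !mulmxA -(mulmxA (invmx Q)) (mulVmx uP).
by rewrite mulmx1 (mulVmx uQ) mul1mx.
Qed.

Lemma comm_mx_invmx P Q : P \in unitmx -> Q \in unitmx -> comm_mx P Q ->
  comm_mx (invmx P) (invmx Q).
Proof. by move=> uP uQ cPQ; rewrite /comm_mx -!invmx_mul // cPQ. Qed.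

Lemma mpoch_unit M p : (forall q : nat, M + q%:R%:M \in unitmx) ->
  mpoch M p \in unitmx.
Proof. by move=> uM; elim: p => [|p IH] /=; rewrite ?unitmx1 // unitmx_mul IH uM. Qed.

Lemma mpochinv_split M j p : (j <= p)%N ->
  (forall q : nat, M + q%:R%:M \in unitmx) ->
  mpochinv (M + j%:R%:M) (p - j) *m mpochinv M j = mpochinv M p.
Proof.
move=> jp uM; rewrite /mpochinv -invmx_mul; first by rewrite -mpoch_add subnKC.
  exact: mpoch_unit.
by apply: mpoch_unit => q; rewrite -addrA -raddfD -natrD; exact: uM.
Qed.

End InversePochhammer.

Section MultiIndex.
Variables (k : nat) (m : 'I_k -> nat) (i : 'I_k) (j : nat).
Hypothesis jm : (j <= m i)%N.

Lemma sum_dec_at : (\sum_(l < k) dec_at m i j l = \sum_(l < k) m l - j)%N.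
Proof.
rewrite (bigD1 i) // [in RHS](bigD1 i) //= {1}/dec_at eqxx addnBAC //.
by congr (_ + _ - _)%N; apply: eq_bigr => l /negbTE li; rewrite /dec_at li.
Qed.

Lemma fact_dec_at (F : numFieldType) :
  (\prod_(l < k) (dec_at m i j l)`!%:R)^-1 =
  (\prod_(l < k) (m l)`!%:R)^-1 * (m i ^_ j)%:R :> F.
Proof.
rewrite (bigD1 i) // [in RHS](bigD1 i) //= {1}/dec_at eqxx -(ffact_fact jm).
rewrite (eq_bigr (fun l => (m l)`!%:R)); last first.
  by move=> l /negbTE li; rewrite /dec_at li.
set a := \prod_(l < k | l != i) _.
have a0 : a != 0.
  by rewrite prodf_seq_neq0; apply/allP => l _; rewrite pnatr_eq0 -lt0n fact_gt0 implybT.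
have f0 : (m i - j)`!%:R != 0 :> F by rewrite pnatr_eq0 -lt0n fact_gt0.
have c0 : (m i ^_ j)%:R != 0 :> F by rewrite pnatr_eq0 -lt0n ffact_gt0.
by rewrite natrM; field; rewrite a0 f0 c0.
Qed.

End MultiIndex.

Section Coefficient.
Variables (F : numFieldType) (r k : nat).
Variables (A : 'M[F]_r) (C : 'I_k -> 'M[F]_r).
Hypothesis hC : forall (l : 'I_k) (q : nat), C l + q%:R%:M \in unitmx.
Hypothesis hCC : forall l l' : 'I_k, C l *m C l' = C l' *m C l.
Variables (m : 'I_k -> nat) (i : 'I_k).

Let Cprod := mxprod_ord (fun l => mpochinv (C l) (m l)).

Lemma FA_coef_term (B' : 'I_k -> 'M[F]_r) (P : 'I_k -> 'M[F]_r) (X : 'M[F]_r) j :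
  (j <= m i)%N ->
  (forall l, mpoch (B' l) (dec_at m i j l) = upd P i X l) ->
  mpoch A j *m FA_coef (A + j%:R%:M) B' (shift_at C i j%:Z) (dec_at m i j)
     *m mpochinv (C i) j =
  ((\prod_(l < k) (m l)`!%:R)^-1 * (m i ^_ j)%:R) *:
     (mpoch A (\sum_(l < k) m l) *m mxprod_ord (upd P i X) *m Cprod).
Proof.
move=> jm eB'.
set Q := fun l => mpochinv (C l) (m l).
have eC' : mxprod_ord (fun l => mpochinv (shift_at C i j%:Z l) (dec_at m i j l)) =
           mxprod_ord (upd Q i (mpochinv (C i + j%:R%:M) (m i - j))).
  by apply: mxprod_ord_eq => l; rewrite /upd /shift_at /dec_at; case: eqVneq => [->|].
have eA : mpoch A j *m mpoch (A + j%:R%:M) (\sum_(l < k) m l - j) =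
          mpoch A (\sum_(l < k) m l).
  by rewrite -mpoch_add subnKC // (leq_trans jm) // (bigD1 i) //= leq_addr.
have cQ : forall l, l != i -> comm_mx (Q l) (mpochinv (C i) j).
  by move=> l _; apply: comm_mx_invmx; rewrite ?mpoch_unit //; exact: comm_mx_mpoch2.
have eCi : mxprod_ord (upd Q i (mpochinv (C i + j%:R%:M) (m i - j)))
             *m mpochinv (C i) j = Cprod.
  rewrite mxprod_upd_mulr // mpochinv_split //.
  by apply: mxprod_ord_eq => l; rewrite /upd; case: eqVneq => [->|].
rewrite /FA_coef (mxprod_ord_eq eB') eC' sum_dec_at // fact_dec_at //.
by rewrite -scalemxAr -!scalemxAl !mulmxA eA -(mulmxA _ _ (mpochinv (C i) j)) eCi.
Qed.

Lemma FA_coef_expand (B B0 : 'I_k -> 'M[F]_r) (n : nat) (Bj : nat -> 'M[F]_r)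
    (cf : nat -> F) (Bf : nat -> 'I_k -> 'M[F]_r) :
  (forall l, l != i -> B0 l = B l) ->
  mpoch (B0 i) (m i) = \sum_(0 <= j < n.+1) cf j *: ((m i ^_ j)%:R *: Bj j) ->
  (forall (j : nat) l, (j <= m i)%N ->
     mpoch (Bf j l) (dec_at m i j l) = if l == i then Bj j else mpoch (B l) (m l)) ->
  FA_coef A B0 C m =
  \sum_(j < n.+1 | (j <= m i)%N)
     cf j *: (mpoch A j *m FA_coef (A + j%:R%:M) (Bf j) (shift_at C i j%:Z) (dec_at m i j)
              *m mpochinv (C i) j).
Proof.
move=> eB0 expB0 eBf.
set P := fun l => mpoch (B l) (m l).
have eB : mxprod_ord (fun l => mpoch (B0 l) (m l)) =
          mxprod_ord (upd P i (\sum_(j < n.+1) (cf j * (m i ^_ j)%:R) *: Bj j)).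
  apply: mxprod_ord_eq => l; rewrite /upd; case: eqVneq => [->|li].
    by rewrite expB0 big_mkord; apply: eq_bigr => j _; rewrite scalerA.
  by rewrite /P eB0.
rewrite /FA_coef eB mxprod_upd_sum mulmx_sumr mulmx_suml scaler_sumr [RHS]big_mkcond.
apply: eq_bigr => j _ /=.
have [jm | mj] := leqP j (m i); last first.
  by rewrite ffact_small // mulr0 scale0r mulmx0 mul0mx scaler0.
rewrite (FA_coef_term (P := P) (X := Bj j) jm) => [|l]; last by rewrite eBf.
by rewrite -scalemxAr -scalemxAl !scalerA; congr (_ *: _); ring.
Qed.

End Coefficient.

Theorem mainTheorem3 (R : realType) (r k : nat) (hk : (1 <= k)%N)
  (A : 'M[R[i]]_r) (B C : 'I_k -> 'M[R[i]]_r)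
  (hC : forall (j : 'I_k) (m : nat), C j + (m%:R)%:M \in unitmx)
  (hCC : forall i j : 'I_k, C i *m C j = C j *m C i)
  (i : 'I_k) (n : nat) (hn : (1 <= n)%N)
  (hB : forall m : nat, B i + (m%:R)%:M \in unitmx) :
  (forall m : 'I_k -> nat,
     FA_coef A (shift_at B i n%:Z) C m =
     \sum_(n1 < n.+1 | (n1 <= m i)%N)
        ('C(n, n1)%:R *:
          (mpoch A n1
           *m FA_coef (A + (n1%:R)%:M) (shift_at B i n1%:Z) (shift_at C i n1%:Z)
                (dec_at m i n1)
           *m mpochinv (C i) n1)))
  /\
  ((forall n1 : nat, (n1 <= n)%N -> B i - (n1%:R)%:M \in unitmx) ->
   forall m : 'I_k -> nat,
     FA_coef A (shift_at B i (- n%:Z)) C m =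
     \sum_(n1 < n.+1 | (n1 <= m i)%N)
        (((-1) ^+ n1 * 'C(n, n1)%:R) *:
          (mpoch A n1
           *m FA_coef (A + (n1%:R)%:M) B (shift_at C i n1%:Z) (dec_at m i n1)
           *m mpochinv (C i) n1))).
Proof.
have shift_off (n' : int) (D : 'I_k -> 'M[R[i]]_r) l :
  l != i -> shift_at D i n' l = D l by move/negbTE; rewrite /shift_at => ->.
split=> [m | _ m].
- apply: (@FA_coef_expand _ r k A C hC hCC m i B (shift_at B i n%:Z) n
           (fun j => mpoch (B i + j%:R%:M) (m i - j)) (fun j => 'C(n, j)%:R)
           (fun j => shift_at B i j%:Z)).
  + exact: shift_off.
  + by rewrite /shift_at eqxx mpoch_shift_up.
  + by move=> j l _; rewrite /shift_at /dec_at; case: eqVneq => [->|].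
- apply: (@FA_coef_expand _ r k A C hC hCC m i B (shift_at B i (- n%:Z)) n
           (fun j => mpoch (B i) (m i - j)) (fun j => (-1) ^+ j * 'C(n, j)%:R)
           (fun=> B)).
  + exact: shift_off.
  + by rewrite /shift_at eqxx mulrNz raddfN mpoch_shift_down.
  + by move=> j l _; rewrite /dec_at; case: eqVneq => [->|].
Qed.
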